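(* Let $A=(a_{ij})_{1\le i,j\le n}$ be a complex Nekrasov matrix and let $\epsilon_1,\dots,\epsilon_n$ be real numbers satisfying either the conditions (C1) or the conditions (C2) below. Define $w_i:=\sum_{j=1}^{i-1}|a_{ij}|\frac{\epsilon_j}{|a_{jj}|}$ and $p_i:=\sum_{j=i+1}^{n}|a_{ij}|\frac{|a_{jj}|-h_j(A)-\epsilon_j}{|a_{jj}|}$ for $i\in N=\{1,\dots,n\}$. Then $\epsilon_i-w_i+p_i>0$ for all $i$ and $$\|A^{-1}\|_\infty\le \frac{\max_{i\in N}\frac{h_i(A)+\epsilon_i}{|a_{ii}|}}{\min_{i\in N}(\epsilon_i-w_i+p_i)}.$$
   Context: For a complex $n\times n$ matrix $A=(a_{ij})$ with $a_{ii}\ne 0$ for all $i$, define recursively $h_1(A):=\sum_{j\ne 1}|a_{1j}|$ and $h_i(A):=\sum_{j=1}^{i-1}|a_{ij}|\frac{h_j(A)}{|a_{jj}|}+\sum_{j=i+1}^{n}|a_{ij}|$ for $i=2,\dots,n$. $A$ is a Nekrasov matrix if $|a_{ii}|>h_i(A)$ for all $i\in\{1,\dots,n\}$. $\|\cdot\|_\infty$ is the matrix norm induced by the vector max-norm (maximum absolute row sum). Conditions (C1): $\epsilon_1>0$, and for $i=2,\dots,n$: $0<\epsilon_i\le |a_{ii}|-h_i(A)$ and $\epsilon_i>\sum_{j=1}^{i-1}\frac{|a_{ij}|\epsilon_j}{|a_{jj}|}$. Conditions (C2): let $k$ be the smallest index such that $a_{kj}=0$ for all $j>k$; $\epsilon_i=0$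 for $i=1,\dots,k-1$, and for $i=k,\dots,n$: $0<\epsilon_i<|a_{ii}|-h_i(A)$ and $\epsilon_i>\sum_{j=k}^{i-1}\frac{|a_{ij}|\epsilon_j}{|a_{jj}|}$ (empty sum for $i=k$). *)

From HB Require Import structures.
From mathcomp Require Import all_boot all_order all_algebra.
From mathcomp Require Import reals complex.
Set Implicit Arguments. Unset Strict Implicit. Unset Printing Implicit Defensive.
Import Order.TTheory GRing.Theory Num.Theory.
Local Open Scope ring_scope.

Section Nekrasov.
Variables (R : realType) (n : nat).
Implicit Types (A : 'M[R[i]]_n.+1).

Definition cabs (z : R[i]) : R := Normc.normc z.

(* row i of the recursion (0-based indices): given the list
   prev = [h_0; ...; h_{i-1}], compute h_i. *)
Definition h_step A (i : nat) (prev : seq R) : R :=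
  \sum_(j < n.+1 | (j < i)%N) cabs (A (inord i) j) * nth 0 prev j / cabs (A j j)
  + \sum_(j < n.+1 | (i < j)%N) cabs (A (inord i) j).

Fixpoint h_list A (k : nat) : seq R :=
  if k is k'.+1 then rcons (h_list A k') (h_step A k' (h_list A k')) else [::].

Definition h A (i : 'I_n.+1) : R := nth 0 (h_list A n.+1) i.

Definition nekrasov A : Prop :=
  (forall i, A i i != 0) /\ (forall i, h A i < cabs (A i i)).

Definition norm_inf (B : 'M[R[i]]_n.+1) : R :=
  \big[Num.max/0]_(i < n.+1) \sum_(j < n.+1) cabs (B i j).

(* Conditions (C1), 0-based: index 0 plays the role of index 1. *)
Definition cond_C1 A (eps : 'I_n.+1 -> R) : Prop :=
  0 < eps ord0 /\
  forall i : 'I_n.+1, (0 < i)%N ->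
    [/\ 0 < eps i, eps i <= cabs (A i i) - h A i &
        \sum_(j < n.+1 | (j < i)%N) cabs (A i j) * eps j / cabs (A j j) < eps i].

Definition cond_C2 A (eps : 'I_n.+1 -> R) : Prop :=
  exists k : 'I_n.+1,
    [/\ (forall j : 'I_n.+1, (k < j)%N -> A k j = 0),
        (forall k' : 'I_n.+1, (k' < k)%N -> exists j : 'I_n.+1, (k' < j)%N /\ A k' j != 0),
        (forall i : 'I_n.+1, (i < k)%N -> eps i = 0) &
        (forall i : 'I_n.+1, (k <= i)%N ->
          [/\ 0 < eps i, eps i < cabs (A i i) - h A i &
              \sum_(j < n.+1 | (k <= j < i)%N) cabs (A i j) * eps j / cabs (A j j) < eps i])].

Definition w A (eps : 'I_n.+1 -> R) (i : 'I_n.+1) : R :=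
  \sum_(j < n.+1 | (j < i)%N) cabs (A i j) * eps j / cabs (A j j).

Definition p A (eps : 'I_n.+1 -> R) (i : 'I_n.+1) : R :=
  \sum_(j < n.+1 | (i < j)%N)
     cabs (A i j) * (cabs (A j j) - h A j - eps j) / cabs (A j j).

End Nekrasov.

From HB Require Import structures.
From mathcomp Require Import all_boot all_order all_algebra.
From mathcomp Require Import reals complex.
From mathcomp Require Import ring lra.
Import Order.TTheory GRing.Theory Num.Theory.
Local Open Scope ring_scope.

(* With the weights d_j := (h_j(A) + eps_j) / |a_jj| > 0, the matrix A D
   (D = diag d) is strictly diagonally dominant by rows, and the recursion
   defining h_i(A) makes its i-th row gap |a_ii| d_i - sum_{j<>i} |a_ij| d_j equal
   to eps_i - w_i + p_i.  If every row gap is at least gam > 0 and A y = x, then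
   at the index m maximizing |y_j| / d_j row m of the system gives
   |y_m| / d_m <= ||x||_oo / gam, hence |y_i| <= d_i ||x||_oo / gam for all i.
   Applied to the unimodular x aligned with row i of A^-1, this bounds the i-th
   absolute row sum of A^-1 by d_i / gam. *)

Section ComplexModulus.
Context {R : realType}.
Implicit Types (x y z : R[i]).

Lemma normC_cabs z : `|z| = (cabs z)%:C%C.
Proof. by []. Qed.

Lemma cabs_ge0 z : 0 <= cabs z.
Proof. by case: z => a b; rewrite /cabs /= sqrtr_ge0. Qed.

Lemma cabs0 : cabs (0 : R[i]) = 0.
Proof. exact: Normc.normc0. Qed.

Lemma cabs_eq0 z : (cabs z == 0) = (z == 0).
Proof. by apply/eqP/eqP => [/Normc.eq0_normc | ->]; last exact: cabs0. Qed.

Lemma cabs_gt0 z : z != 0 -> 0 < cabs z.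
Proof. by move=> z_nz; rewrite lt_def cabs_eq0 z_nz cabs_ge0. Qed.

Lemma cabsM x y : cabs (x * y) = cabs x * cabs y.
Proof. exact: Normc.normcM. Qed.

Lemma cabsV z : cabs z^-1 = (cabs z)^-1.
Proof. exact: Normc.normcV. Qed.

Lemma cabs_real (r : R) : cabs r%:C%C = `|r|.
Proof. by rewrite /cabs /= expr0n /= addr0 sqrtr_sqr. Qed.

Lemma cabsB x y : cabs (x - y) <= cabs x + cabs y.
Proof. by have := le_normcD x (- y); rewrite normcN. Qed.

Lemma cabs_sum (I : finType) (P : pred I) (F : I -> R[i]) :
  cabs (\sum_(j | P j) F j) <= \sum_(j | P j) cabs (F j).
Proof.
elim/big_ind2: _ => [|x1 x2 y1 y2 le1 le2|//]; first by rewrite cabs0.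
exact: le_trans (le_normcD _ _) (lerD le1 le2).
Qed.

End ComplexModulus.

Lemma psumr_gt0 (R : numDomainType) (I : finType) (P : pred I) (F : I -> R) l :
  (forall j, P j -> 0 <= F j) -> P l -> 0 < F l -> 0 < \sum_(j | P j) F j.
Proof.
move=> F_ge0 Pl Fl_gt0; rewrite lt_def psumr_neq0 // sumr_ge0 // andbT.
by apply/hasP; exists l; rewrite ?mem_index_enum ?Pl.
Qed.

Lemma big_ord_neq_split (V : nmodType) m (i : 'I_m) (F : 'I_m -> V) :
  \sum_(j < m | j != i) F j
  = \sum_(j < m | (j < i)%N) F j + \sum_(j < m | (i < j)%N) F j.
Proof.
rewrite (bigID (fun j : 'I_m => (j < i)%N)) /=.
by congr (_ + _); apply: eq_bigl => j /=; rewrite -val_eqE /=;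
  case: ltngtP.
Qed.

Section NekrasovRecursion.
Context {R : realType} {n : nat}.
Variable A : 'M[R[i]]_n.+1.

Lemma size_h_list k : size (h_list A k) = k.
Proof. by elim: k => //= k IH; rewrite size_rcons IH. Qed.

Lemma nth_h_list {j k k'} :
  (j < k)%N -> (k <= k')%N -> nth 0 (h_list A k) j = nth 0 (h_list A k') j.
Proof.
move=> lt_jk; elim: k' => [|k' IH]; first by rewrite leqn0 => /eqP k0; subst k.
rewrite leq_eqVlt => /orP[/eqP -> // | le_kk'].
by rewrite (IH le_kk') /= nth_rcons size_h_list (leq_trans lt_jk le_kk').
Qed.

Lemma h_rec (i : 'I_n.+1) :
  h A i = \sum_(j < n.+1 | (j < i)%N) cabs (A i j) * h A j / cabs (A j j)
          + \sum_(j < n.+1 | (i < j)%N) cabs (A i j).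
Proof.
have -> : h A i = h_step A i (h_list A i).
  rewrite /h -(nth_h_list (ltnSn i) (ltn_ord i)) /=.
  by rewrite nth_rcons size_h_list ltnn eqxx.
rewrite /h_step inord_val; congr (_ + _); apply: eq_bigr => j lt_ji.
by rewrite /h (nth_h_list lt_ji (ltnW (ltn_ord i))).
Qed.

Lemma h_ge0 (i : 'I_n.+1) : 0 <= h A i.
Proof.
have [m] := ubnP i; elim: m i => // m IH i; rewrite ltnS => le_im; rewrite h_rec.
rewrite addr_ge0 ?sumr_ge0 // => j lt_ji; rewrite ?cabs_ge0 //.
by rewrite !mulr_ge0 ?invr_ge0 ?cabs_ge0 ?IH ?(leq_trans lt_ji).
Qed.

Lemma h_gt0 {i l : 'I_n.+1} : (i < l)%N -> A i l != 0 -> 0 < h A i.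
Proof.
move=> lt_il nz_il; rewrite h_rec ltr_wpDl //.
  by rewrite sumr_ge0 // => j _; rewrite !mulr_ge0 ?invr_ge0 ?cabs_ge0 ?h_ge0.
by apply: (@psumr_gt0 _ _ _ _ l) => // [j _|]; rewrite ?cabs_ge0 ?cabs_gt0.
Qed.

End NekrasovRecursion.

Section ScaledDominance.
Context {R : realType} {n : nat}.
Variable A : 'M[R[i]]_n.+1.
Variables (d : 'I_n.+1 -> R) (gam : R).
Hypotheses (d_gt0 : forall j, 0 < d j) (gam_gt0 : 0 < gam).
Hypothesis row_gap_ge : forall m,
  gam <= cabs (A m m) * d m - \sum_(j < n.+1 | j != m) cabs (A m j) * d j.

Lemma dominant_solution_bound {y x : 'cV[R[i]]_n.+1} {beta : R} :
  A *m y = x -> (forall j, cabs (x j 0) <= beta) ->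
  forall i, cabs (y i 0) <= d i * (beta / gam).
Proof.
move=> Ayx x_le i; pose ratio j := cabs (y j 0) / d j.
have [m _ ratio_max] := @arg_maxP _ _ _ ord0 predT ratio isT.
set t := ratio m.
have t_ge0 : 0 <= t by rewrite divr_ge0 ?cabs_ge0 ?ltW.
have y_le j : cabs (y j 0) <= t * d j by rewrite -ler_pdivrMr //; exact: ratio_max.
have ym : cabs (y m 0) = t * d m by rewrite /t /ratio divfK ?gt_eqF.
set S := \sum_(j < n.+1 | j != m) cabs (A m j) * d j.
have row_m : A m m * y m 0 = x m 0 - \sum_(j < n.+1 | j != m) A m j * y j 0.
  by rewrite -Ayx mxE (bigD1 m) //= addrK.
have off_diag : cabs (\sum_(j < n.+1 | j != m) A m j * y j 0) <= t * S.
  apply: le_trans (cabs_sum _ _ _) _; rewrite /S mulr_sumr; apply: ler_sum => j _.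
  by rewrite cabsM mulrCA ler_wpM2l ?cabs_ge0 ?y_le.
have diag : cabs (A m m) * (t * d m) <= beta + t * S.
  by rewrite -ym -cabsM row_m (le_trans (cabsB _ _)) ?lerD ?x_le.
have t_le : t <= beta / gam.
  rewrite ler_pdivlMr //; have := ler_wpM2l t_ge0 (row_gap_ge m); rewrite -/S.
  nra.
by apply: le_trans (y_le i) _; rewrite mulrC ler_wpM2l ?(ltW (d_gt0 i)).
Qed.

Lemma dominant_unitmx : A \in unitmx.
Proof.
rewrite unitmxE unitfE -det_tr; apply/negP => /det0P [v v_nz vA].
have Av : A *m v^T = 0 by rewrite -[A]trmxK -trmx_mul vA trmx0.
have zero_le j : cabs ((0 : 'cV[R[i]]_n.+1) j 0) <= 0 by rewrite mxE cabs0.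
have v_le := dominant_solution_bound Av zero_le.
move/eqP: v_nz; apply; apply/matrixP => a j; rewrite (ord1 a) mxE; apply/eqP.
by rewrite -cabs_eq0 eq_le cabs_ge0 andbT; have := v_le j; rewrite mxE mul0r mulr0.
Qed.

Lemma dominant_invmx_row_sum i :
  \sum_(j < n.+1) cabs (invmx A i j) <= d i / gam.
Proof.
set B := invmx A.
pose x : 'cV[R[i]]_n.+1 := \col_j (if B i j == 0 then 0 else `|B i j| / B i j).
have ABx : A *m (B *m x) = x by rewrite mulmxA mulmxV ?dominant_unitmx ?mul1mx.
have x_le j : cabs (x j 0) <= 1.
  rewrite mxE; case: eqP => [_ | /eqP b_nz]; first by rewrite cabs0.
  by rewrite cabsM cabsV normC_cabs cabs_real ger0_norm ?cabs_ge0 ?mulfV ?cabs_eq0.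
have Bx_i : (B *m x) i 0 = (\sum_(j < n.+1) cabs (B i j))%:C%C.
  rewrite mxE rmorph_sum; apply: eq_bigr => j _; rewrite mxE.
  case: eqP => [-> | /eqP b_nz]; first by rewrite mulr0 cabs0.
  by rewrite mulrC divfK // -normC_cabs.
have := dominant_solution_bound ABx x_le i.
by rewrite Bx_i cabs_real ger0_norm ?mul1r // sumr_ge0 // => j _; exact: cabs_ge0.
Qed.

Lemma dominant_norm_inf_invmx :
  norm_inf (invmx A) <= \big[Num.max/d ord0]_(i < n.+1) d i / gam.
Proof.
have d_le i : d i <= \big[Num.max/d ord0]_(j < n.+1) d j by exact: le_bigmax.
apply: bigmax_le => [|i _].
  by rewrite divr_ge0 ?ltW ?(lt_le_trans (d_gt0 ord0) (d_le ord0)).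
by apply: le_trans (dominant_invmx_row_sum i) _; rewrite ler_pM2r ?invr_gt0.
Qed.

End ScaledDominance.

Section NekrasovGaps.
Context {R : realType} {n : nat}.
Variables (A : 'M[R[i]]_n.+1) (eps : 'I_n.+1 -> R).
Hypothesis diag_nz : forall j, A j j != 0.

Definition nekrasov_scale j := (h A j + eps j) / cabs (A j j).

Lemma nekrasov_scale_gt0 j : 0 < h A j + eps j -> 0 < nekrasov_scale j.
Proof. by move=> num_gt0; rewrite divr_gt0 ?cabs_gt0. Qed.

Lemma nekrasov_row_gap (i : 'I_n.+1) :
  cabs (A i i) * nekrasov_scale i
    - \sum_(j < n.+1 | j != i) cabs (A i j) * nekrasov_scale j
  = eps i - w A eps i + p A eps i.
Proof.
have cabs_nz j : cabs (A j j) != 0 by rewrite cabs_eq0.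
rewrite big_ord_neq_split /nekrasov_scale mulrC divfK // h_rec /w /p.
have -> : \sum_(j < n.+1 | (j < i)%N) cabs (A i j) * ((h A j + eps j) / cabs (A j j))
   = \sum_(j < n.+1 | (j < i)%N) cabs (A i j) * h A j / cabs (A j j)
   + \sum_(j < n.+1 | (j < i)%N) cabs (A i j) * eps j / cabs (A j j).
  by rewrite -big_split; apply: eq_bigr => j _; rewrite mulrDl mulrDr !mulrA.
have -> : \sum_(j < n.+1 | (i < j)%N)
             cabs (A i j) * (cabs (A j j) - h A j - eps j) / cabs (A j j)
   = \sum_(j < n.+1 | (i < j)%N) cabs (A i j)
   - \sum_(j < n.+1 | (i < j)%N) cabs (A i j) * ((h A j + eps j) / cabs (A j j)).
  by rewrite -sumrB; apply: eq_bigr => j _; field.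
lra.
Qed.

Lemma p_ge0 (i : 'I_n.+1) :
  (forall j : 'I_n.+1, (i < j)%N -> eps j <= cabs (A j j) - h A j) -> 0 <= p A eps i.
Proof.
move=> eps_le; apply: sumr_ge0 => j /eps_le eps_j.
by rewrite divr_ge0 ?mulr_ge0 ?cabs_ge0 ?subr_ge0.
Qed.

Lemma p_gt0 {i l : 'I_n.+1} : (i < l)%N -> A i l != 0 ->
  (forall j : 'I_n.+1, (i < j)%N -> eps j < cabs (A j j) - h A j) ->
  0 < p A eps i.
Proof.
move=> lt_il nz_il eps_lt; apply: (@psumr_gt0 _ _ _ _ l) => // [j /eps_lt eps_j|].
  by rewrite divr_ge0 ?mulr_ge0 ?cabs_ge0 // subr_ge0 ltW.
by rewrite divr_gt0 ?mulr_gt0 ?cabs_gt0 // subr_gt0 eps_lt.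
Qed.

Lemma cond_C1_eps_gt0 : cond_C1 A eps -> forall j, 0 < eps j.
Proof.
case=> eps0_gt0 C1 j; case: (posnP j) => [j0 | /C1[] //].
by rewrite (_ : j = ord0) //; exact: val_inj.
Qed.

Lemma cond_C1_h_eps_gt0 : cond_C1 A eps -> forall j, 0 < h A j + eps j.
Proof. by move=> C1 j; rewrite ltr_wpDl ?h_ge0 ?(cond_C1_eps_gt0 C1). Qed.

Lemma cond_C1_gap_gt0 : cond_C1 A eps -> forall i, 0 < eps i - w A eps i + p A eps i.
Proof.
move=> C1 i; have eps_gt0 := cond_C1_eps_gt0 C1; case: C1 => _ C1.
have p_ge : 0 <= p A eps i.
  by apply: p_ge0 => j lt_ij; case: (C1 j (leq_ltn_trans (leq0n i) lt_ij)).
case: (posnP i) => [i0 | /C1[_ _ w_lt]]; last by rewrite -/(w A eps i) in w_lt; lra.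
have w0 : w A eps i = 0 by rewrite /w big_pred0 // => j; rewrite i0.
by have := eps_gt0 i; lra.
Qed.

Section ConditionC2.
Variable k : 'I_n.+1.
Hypothesis h_lt : forall j, h A j < cabs (A j j).
Hypothesis upper_nz : forall k' : 'I_n.+1, (k' < k)%N ->
  exists j : 'I_n.+1, (k' < j)%N /\ A k' j != 0.
Hypothesis eps_lt_k : forall i : 'I_n.+1, (i < k)%N -> eps i = 0.
Hypothesis eps_ge_k : forall i : 'I_n.+1, (k <= i)%N ->
  [/\ 0 < eps i, eps i < cabs (A i i) - h A i &
      \sum_(j < n.+1 | (k <= j < i)%N) cabs (A i j) * eps j / cabs (A j j) < eps i].

Lemma cond_C2_eps_lt j : eps j < cabs (A j j) - h A j.
Proof. by case: (ltnP j k) => [/eps_lt_k -> | /eps_ge_k[]]; rewrite ?subr_gt0. Qed.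

Lemma cond_C2_h_eps_gt0 j : 0 < h A j + eps j.
Proof.
case: (ltnP j k) => [lt_jk | /eps_ge_k[eps_gt0 _ _]]; last by rewrite ltr_wpDl ?h_ge0.
have [l [lt_jl nz_jl]] := upper_nz _ lt_jk.
by rewrite eps_lt_k // addr0 (h_gt0 A lt_jl nz_jl).
Qed.

Lemma cond_C2_w i :
  w A eps i = \sum_(j < n.+1 | (k <= j < i)%N) cabs (A i j) * eps j / cabs (A j j).
Proof.
rewrite /w (bigID (fun j : 'I_n.+1 => (k <= j)%N)) /= [X in _ + X]big1 ?addr0.
  by apply: eq_bigl => j; rewrite andbC.
by move=> j /andP[_]; rewrite -ltnNge => /eps_lt_k ->; rewrite mulr0 mul0r.
Qed.

Lemma cond_C2_gap_gt0 i : 0 < eps i - w A eps i + p A eps i.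
Proof.
have eps_lt (j : 'I_n.+1) (_ : (i < j)%N) := cond_C2_eps_lt j.
case: (ltnP i k) => [lt_ik | /eps_ge_k[_ _]]; last first.
  by rewrite -cond_C2_w => w_lt; have := p_ge0 i (fun j ij => ltW (eps_lt j ij)); lra.
have [l [lt_il nz_il]] := upper_nz _ lt_ik.
have w0 : w A eps i = 0.
  by rewrite /w big1 // => j lt_ji; rewrite eps_lt_k ?mulr0 ?mul0r ?(ltn_trans lt_ji).
by rewrite eps_lt_k // w0 subr0 add0r (p_gt0 lt_il nz_il).
Qed.

End ConditionC2.

End NekrasovGaps.

Theorem theorem3p2 (R : realType) (n : nat) (A : 'M[R[i]]_n.+1)
    (eps : 'I_n.+1 -> R) :
  nekrasov A ->
  cond_C1 A eps \/ cond_C2 A eps ->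
  (forall i, 0 < eps i - w A eps i + p A eps i) /\
  norm_inf (invmx A) <=
    (\big[Num.max/(h A ord0 + eps ord0) / cabs (A ord0 ord0)]_(i < n.+1)
        ((h A i + eps i) / cabs (A i i)))
    / (\big[Num.min/eps ord0 - w A eps ord0 + p A eps ord0]_(i < n.+1)
        (eps i - w A eps i + p A eps i)).
Proof.
move=> [diag_nz h_lt] C1_or_C2.
have [h_eps_gt0 gap_gt0] :
    (forall j, 0 < h A j + eps j) /\ (forall i, 0 < eps i - w A eps i + p A eps i).
  case: C1_or_C2 => [C1 | [k [_ upper_nz eps_lt_k eps_ge_k]]]; split.
  - exact: (cond_C1_h_eps_gt0 _ _ C1).
  - exact: (cond_C1_gap_gt0 _ _ C1).
  - exact: (cond_C2_h_eps_gt0 _ _ _ upper_nz eps_lt_k eps_ge_k).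
  - exact: (cond_C2_gap_gt0 _ _ diag_nz _ h_lt upper_nz eps_lt_k eps_ge_k).
split=> //.
set gam := \big[Num.min/_]_(i < n.+1) _.
have gam_gt0 : 0 < gam by apply: lt_bigmin.
have scale_gt0 j : 0 < nekrasov_scale A eps j by exact: nekrasov_scale_gt0.
have gap_ge m : gam <= cabs (A m m) * nekrasov_scale A eps m
    - \sum_(j < n.+1 | j != m) cabs (A m j) * nekrasov_scale A eps j.
  by rewrite nekrasov_row_gap //; exact: bigmin_le.
have := dominant_norm_inf_invmx A _ gam scale_gt0 gam_gt0 gap_ge.
by rewrite /nekrasov_scale.
Qed.
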